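(* Let $k$ be a field, $R=k[x_1,\ldots,x_n]$, and let $I$ be an almost reverse lexicographic ideal whose last generator is $M_\omega=x_1^{\omega_1}\cdots x_\mu^{\omega_\mu}$ with $\omega_\mu>0$, $\mu\ge2$. Let $1\le i\le\mu-1$. For every $\alpha\in\mathcal{I}_{i-1}$ and every $\beta\in\mathcal{I}_i$, \[|\alpha|+f_i(\alpha)\le f_i(0)\le|\beta|+f_{i+1}(\beta),\] where $0\in\mathbb{Z}^{i-1}$ is the zero tuple. In particular, if $N,M\in\mathcal{G}(I)$ with $\max N<\max M$, then $\deg N\le\deg M$.
   Context: Monomial order: degree reverse lexicographic: for $M=x^\alpha,N=x^\beta$, $M>N$ iff $\deg M>\deg N$, or degrees are equal and for the largest $s$ with $\alpha_s\neq\beta_s$ one has $\alpha_s<\beta_s$. For $\alpha\in\mathbb{Z}^s_{\ge0}$, $x^\alpha=x_1^{\alpha_1}\cdots x_s^{\alpha_s}$, $|\alpha|=\sum\alpha_j$, and $\alpha\le\beta$ iff $x^\alpha\le x^\beta$. Almost reverse lexicographic: for every monomial $M$ and every minimal monomial generator $N$ of $I$ with $\deg M=\deg N$ and $M>N$, $M\in I$. $\mathcal{G}(I)$ is the minimal monomial generating set; $\max M$ is the largest $i$ with $x_i\mid M$. The last generator $M_\omega$ is the element of $\mathcal{G}(I)$ of maximal degree that is smallest in the order among elements of $\mathcal{G}(I)$ of that degree; $\mu=\max M_\omega$. $f_1=\min\{t:x_1^t\in I\}$; for $2\le i\le\mu$, $\alpha\in\mathbb{Z}^{i-1}_{\ge0}$,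 $f_i(\alpha)=\min\{t\ge0:x^\alpha x_i^t\in I\}$. For $1\le i\le\mu-2$, $\mathcal{I}_i=\{(\alpha_1,\ldots,\alpha_i)\in\mathbb{Z}^i_{\ge0}: 0\le\alpha_1<f_1,\ 0\le\alpha_j<f_j(\alpha_1,\ldots,\alpha_{j-1})\ (2\le j\le i)\}$, and $\mathcal{I}_{\mu-1}$ is the set of $(\alpha_1,\ldots,\alpha_{\mu-1})$ satisfying these inequalities for $j\le\mu-1$ together with $(\alpha_1,\ldots,\alpha_{\mu-1})\ge(\omega_1,\ldots,\omega_{\mu-1})$. Convention: $\mathcal{I}_0$ consists of the empty tuple $0\in\mathbb{Z}^0$, with $|0|=0$ and $f_1(0)=f_1$. *)

From mathcomp Require Import all_boot all_algebra.
From mathcomp Require Import mpoly.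
From Stdlib Require Import ClassicalEpsilon.

Set Implicit Arguments.
Unset Strict Implicit.
Unset Printing Implicit Defensive.

Import GRing.Theory.
Local Open Scope ring_scope.

(* Variables: x_1,...,x_n correspond to the indices 0,...,n-1 of 'I_n.
   A monomial x^a is 'X_[a] with a : 'X_{1..n}; its degree is mdeg a. *)

Section MonomialIdeals.
Variables (k : fieldType) (n : nat).

Definition is_ideal (I : {pred {mpoly k[n]}}) : Prop :=
  [/\ 0 \in I,
      (forall p q, p \in I -> q \in I -> p + q \in I) &
      (forall r p, p \in I -> r * p \in I)].

(* monomial ideal: an ideal generated by monomials, equivalently an ideal
   containing every monomial occurring in each of its elements *)
Definition is_monomial_ideal (I : {pred {mpoly k[n]}}) : Prop :=
  is_ideal I /\ (forall p, p \in I -> forall m, m \in msupp p -> 'X_[m] \in I).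

Definition revlex_gt (a b : 'X_{1..n}) : bool :=
  (mdeg b < mdeg a)%N ||
  ((mdeg a == mdeg b) &&
   [exists s : 'I_n, (a s < b s)%N &&
                     [forall t : 'I_n, (s < t)%N ==> (a t == b t)]]).

Definition revlex_ge (a b : 'X_{1..n}) : bool := (a == b) || revlex_gt a b.

Definition mdiv (a b : 'X_{1..n}) : bool := [forall i : 'I_n, (a i <= b i)%N].

Definition mingen (I : {pred {mpoly k[n]}}) (m : 'X_{1..n}) : Prop :=
  'X_[m] \in I /\ (forall m', 'X_[m'] \in I -> mdiv m' m -> m' = m).

Definition almost_revlex (I : {pred {mpoly k[n]}}) : Prop :=
  forall M N : 'X_{1..n}, mingen I N -> mdeg M = mdeg N -> revlex_gt M N ->
    'X_[M] \in I.

Definition last_generator (I : {pred {mpoly k[n]}}) (w : 'X_{1..n}) : Prop :=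
  [/\ mingen I w,
      (forall N, mingen I N -> (mdeg N <= mdeg w)%N) &
      (forall N, mingen I N -> mdeg N = mdeg w -> N <> w -> revlex_gt N w)].

(* max M : largest (1-based) i with x_i | M, 0 for M = 1 *)
Definition maxvar (m : 'X_{1..n}) : nat := \max_(i < n | (0 < m i)%N) i.+1.

(* the tuple (a_1,...,a_j), viewed as a monomial in x_1..x_j *)
Definition trunc (j : nat) (a : 'X_{1..n}) : 'X_{1..n} :=
  [multinom (if (i < j)%N then a i else 0%N) | i < n].

(* x^a * x_i^t  (i is 1-based) *)
Definition mulxi (a : 'X_{1..n}) (i t : nat) : 'X_{1..n} :=
  [multinom (a j + (if (j.+1 == i)%N then t else 0%N))%N | j < n].

(* f_i(a) = min{t >= 0 : x^a x_i^t \in I}  (0 if no such t; junk value) *)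
Definition fI (I : {pred {mpoly k[n]}}) (i : nat) (a : 'X_{1..n}) : nat :=
  match excluded_middle_informative
          (exists t : nat, 'X_[mulxi a i t] \in I) with
  | left ex => ex_minn ex
  | right _ => 0%N
  end.

(* the set \mathcal{I}_j (j >= 0), tuples of length j encoded as monomials
   supported on x_1..x_j; mu = max M_w *)
Definition calI (I : {pred {mpoly k[n]}}) (w : 'X_{1..n}) (mu j : nat)
    (a : 'X_{1..n}) : Prop :=
  [/\ forall l : 'I_n, (j <= l)%N -> a l = 0%N,
      forall l : 'I_n, (l < j)%N -> (a l < fI I l.+1 (trunc l a))%N &
      (j = mu.-1 -> revlex_ge a (trunc mu.-1 w))].

End MonomialIdeals.

From mathcomp Require Import all_boot all_algebra.
From mathcomp Require Import mpoly.
From mathcomp Require Import zify.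
From Stdlib Require Import Classical ClassicalEpsilon.

Set Implicit Arguments.
Unset Strict Implicit.
Unset Printing Implicit Defensive.

(* The almost reverse lexicographic property yields a criterion for membership:
   if N is a minimal generator, deg m >= deg N, both x^m and N involve only
   x_1, ..., x_j, and the exponent of x_j in m is smaller than in N, then some
   divisor of x^m of degree deg N is revlex-larger than N, so x^m lies in I.
   Applied to the pure power x_i^(f_i(0)), which is a minimal generator, this
   bounds |a| + f_i(a).  Applied to a minimal generator N dividing
   x^b x_(i+1)^(f_(i+1)(b)), it shows that deg N >= f_i(0) unless x^b is
   already in I.  The same criterion, applied to the last generator M_w and to
   the bound b >= (w_1, ..., w_(mu-1)), shows that f_mu(b) is well defined, and
   applied to two minimal generators it gives the comparison of degrees. *)

Section Monomials.
Variable n : nat.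
Implicit Types a b c m : 'X_{1..n}.

(* An ordinal q : 'I_n stands for the variable x_(q+1): this is why the
   1-based variable index passed to [mulxi] and [fI] is written q.+1. *)

Lemma mdivP a b : reflect (forall i, a i <= b i)%N (mdiv a b).
Proof. exact: forallP. Qed.

Lemma mdiv_refl m : mdiv m m.
Proof. exact/mdivP. Qed.

Lemma mdiv_trans a b c : mdiv a b -> mdiv b c -> mdiv a c.
Proof. by move=> /mdivP ab /mdivP bc; apply/mdivP=> i; apply: leq_trans (ab i) (bc i). Qed.

Lemma mdeg_mdiv a b : mdiv a b -> (mdeg a <= mdeg b)%N.
Proof. by move=> /mdivP ab; rewrite !mdegE; apply: leq_sum => i _. Qed.

Lemma mdiv_mdeg_eq a b : mdiv a b -> (mdeg b <= mdeg a)%N -> a = b.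
Proof.
move=> /mdivP ab; have -> : b = (a + (b - a))%MM.
  by apply/mnmP=> i; rewrite mnmDE mnmBE; have := ab i; lia.
rewrite mdegD -{2}(addn0 (mdeg a)) leq_add2l leqn0 mdeg_eq0 => /eqP ->.
by rewrite addm0.
Qed.

Lemma exists_mdiv_mdeg e m : (e <= mdeg m)%N -> exists2 c, mdiv c m & mdeg c = e.
Proof.
elim: e => [|e IHe] le_em.
  by exists 0%MM; [apply/mdivP=> i; rewrite mnm0E | rewrite mdeg0].
have [c cm dc] := IHe (ltnW le_em).
have /existsP [j lt_cm] : [exists j, (c j < m j)%N].
  apply: contraT => /existsPn ge_cm.
  have /mdeg_mdiv : mdiv m c by apply/mdivP=> j; rewrite leqNgt ge_cm.
  by rewrite dc; lia.
exists (c + U_(j))%MM; last by rewrite mdegD mdeg1 dc addn1.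
apply/mdivP=> i; rewrite mnmDE mnm1E.
by case: eqP => [<-|_]; rewrite ?addn1 ?addn0 //; apply: (mdivP _ _ cm).
Qed.

Lemma revlex_gt_at a b (p : 'I_n) : mdeg a = mdeg b -> (a p < b p)%N ->
  (forall t : 'I_n, (p < t)%N -> a t = b t) -> revlex_gt a b.
Proof.
move=> dab lt_ab eq_ab; apply/orP; right; rewrite dab eqxx /=.
apply/existsP; exists p; rewrite lt_ab /=.
by apply/forallP=> t; apply/implyP=> lt_pt; rewrite eq_ab.
Qed.

Definition vanishes_from (j : nat) m := forall l : 'I_n, (j <= l)%N -> m l = 0%N.

Lemma vanishes_from0 j : vanishes_from j 0%MM.
Proof. by move=> l _; rewrite mnm0E. Qed.

Lemma vanishes_from_leq j j' m : vanishes_from j m -> (j <= j')%N -> vanishes_from j' m.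
Proof. by move=> vm le_jj' l le_j'l; apply: vm; apply: leq_trans le_j'l. Qed.

Lemma maxvar_vanishes m : vanishes_from (maxvar m) m.
Proof.
move=> t le_mt; apply/eqP; rewrite eqn0Ngt; apply/negP=> mt_gt0.
have := @leq_bigmax_cond _ (fun i : 'I_n => 0 < m i)%N (fun i : 'I_n => i.+1) t mt_gt0.
by rewrite -/(maxvar m); lia.
Qed.

Lemma maxvar_last m : (0 < maxvar m)%N -> exists2 p : 'I_n, p.+1 = maxvar m & (0 < m p)%N.
Proof.
rewrite /maxvar; case: (pickP (fun i : 'I_n => 0 < m i)%N) => [i0 mi0 _|m0].
  by rewrite (bigmax_eq_arg i0) //; case: arg_maxnP => //= i mi _; exists i.
by rewrite big_pred0.
Qed.

Lemma mulxiE a i t (j : 'I_n) :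
  mulxi a i t j = (a j + (if j.+1 == i then t else 0))%N.
Proof. by rewrite mnmE. Qed.

Lemma mulxi_at a (q : 'I_n) t : mulxi a q.+1 t q = (a q + t)%N.
Proof. by rewrite mulxiE eqxx. Qed.

Lemma mulxi_off a (q j : 'I_n) t : j != q -> mulxi a q.+1 t j = a j.
Proof. by move=> ne_jq; rewrite mulxiE eqSS (negbTE (ne_jq : j != q :> nat)) addn0. Qed.

Lemma mulxi0 a i : mulxi a i 0 = a.
Proof. by apply/mnmP=> j; rewrite mulxiE; case: ifP; rewrite addn0. Qed.

Lemma mdeg_mulxi a (q : 'I_n) t : mdeg (mulxi a q.+1 t) = (mdeg a + t)%N.
Proof.
have -> : mulxi a q.+1 t = (a + U_(q) *+ t)%MM.
  apply/mnmP=> j; rewrite mnmDE mulmnE mnm1E.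
  case: (eqVneq q j) => [->|ne_qj]; first by rewrite mulxi_at mul1n.
  by rewrite mulxi_off 1?eq_sym // mul0n addn0.
by rewrite mdegD mdegMn mdeg1 mul1n.
Qed.

Lemma vanishes_mulxi a (q : 'I_n) t :
  vanishes_from q.+1 a -> vanishes_from q.+1 (mulxi a q.+1 t).
Proof.
move=> va l lt_ql; have ne_lq : l != q by apply: contraTneq lt_ql => ->; rewrite ltnn.
by rewrite mulxi_off // va.
Qed.

Lemma trunc_mulxi a (q : 'I_n) : vanishes_from q.+1 a -> mulxi (trunc q a) q.+1 (a q) = a.
Proof.
move=> va; apply/mnmP=> j; rewrite mulxiE mnmE eqSS.
by case: (ltngtP j q) => [_|/va ->|/val_inj ->]; rewrite ?addn0.
Qed.

End Monomials.

Section MonomialIdeal.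
Variables (k : fieldType) (n : nat) (I : {pred {mpoly k[n]}}).
Implicit Types a b c m w N M : 'X_{1..n}.

Lemma exists_mingen_mdiv m : 'X_[m] \in I -> exists2 N, mingen I N & mdiv N m.
Proof.
have [d lt_md] := ubnP (mdeg m); elim: d m lt_md => // d IHd m lt_md Im.
have [[m' Im' [m'm ne_m'm]]|min_m] :=
  classic (exists2 m', 'X_[m'] \in I & mdiv m' m /\ m' <> m).
  have lt_m'm : (mdeg m' < mdeg m)%N.
    by rewrite ltnNge; apply: contra_notN ne_m'm; apply: mdiv_mdeg_eq.
  have [N gN Nm'] := IHd m' (leq_trans lt_m'm lt_md) Im'.
  by exists N => //; apply: mdiv_trans Nm' m'm.
exists m; last exact: mdiv_refl.
by split=> // m' Im' m'm; apply: NNPP => ne_m'm; apply: min_m; exists m'.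
Qed.

Lemma fI_mem i a : (exists t, 'X_[mulxi a i t] \in I) -> 'X_[mulxi a i (fI I i a)] \in I.
Proof.
by move=> ex; rewrite /fI; case: excluded_middle_informative => [{}ex|//]; case: ex_minnP.
Qed.

Lemma fI_min i a t : 'X_[mulxi a i t] \in I -> (fI I i a <= t)%N.
Proof.
move=> It; rewrite /fI; case: excluded_middle_informative => [ex|[]]; last by exists t.
by case: ex_minnP => s _; apply.
Qed.

Lemma calI_notin w mu j a : (j <= n)%N -> 'X_[0%MM] \notin I ->
  calI I w mu j a -> 'X_[a] \notin I.
Proof.
move=> le_jn I0 [va lt_af _]; case: j le_jn va lt_af => [_ va _|j lt_jn va lt_af].
  by suff -> : a = 0%MM by []; apply/mnmP=> l; rewrite mnm0E va.
pose q := Ordinal lt_jn; have {}va : vanishes_from q.+1 a by [].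
rewrite -(trunc_mulxi va); apply: contraTN (lt_af q (ltnSn j)) => Iaf.
by rewrite -leqNgt; apply: fI_min.
Qed.

Lemma one_notin_mingen w (p : 'I_n) : mingen I w -> (0 < w p)%N -> 'X_[0%MM] \notin I.
Proof.
move=> [_ min_w] wp; apply/negP=> I0.
have w0 : 0%MM = w by apply: min_w I0 _; apply/mdivP=> i; rewrite mnm0E.
by rewrite -w0 mnm0E in wp.
Qed.

Lemma mingen_pure_power (q : 'I_n) : (exists t, 'X_[mulxi 0 q.+1 t] \in I) ->
  mingen I (mulxi 0 q.+1 (fI I q.+1 0)).
Proof.
move=> ex; split=> [|m Im md]; first exact: fI_mem.
have Em : m = mulxi 0 q.+1 (m q).
  apply/mnmP=> j; case: (eqVneq j q) => [->|ne_jq]; first by rewrite mulxi_at mnm0E.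
  by have := mdivP _ _ md j; rewrite !mulxi_off // !mnm0E; lia.
apply: mdiv_mdeg_eq => //; rewrite Em !mdeg_mulxi mdeg0.
by rewrite Em in Im; apply: fI_min.
Qed.

Hypothesis monI : is_monomial_ideal I.

Lemma mem_mdiv c m : 'X_[c] \in I -> mdiv c m -> 'X_[m] \in I.
Proof.
move: monI => [[_ _ mulI] _] Ic /mdivP cm.
have -> : m = ((m - c) + c)%MM by apply/mnmP=> i; rewrite mnmDE mnmBE; have := cm i; lia.
by rewrite mpolyXD mulI.
Qed.

Hypothesis arI : almost_revlex I.

Lemma almost_revlex_mdiv N m (p : 'I_n) : mingen I N -> (mdeg N <= mdeg m)%N ->
  (m p < N p)%N -> vanishes_from p.+1 m -> vanishes_from p.+1 N ->
  exists2 c, mdiv c m & mdeg c = mdeg N /\ 'X_[c] \in I.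
Proof.
move=> gN le_Nm lt_mN vm vN; have [c cm dc] := exists_mdiv_mdeg le_Nm.
exists c => //; split=> //; apply: (arI gN dc).
apply: (revlex_gt_at (p := p)) => //; first exact: leq_ltn_trans (mdivP _ _ cm p) lt_mN.
by move=> t lt_pt; have := mdivP _ _ cm t; rewrite vm // vN //; case: (c t).
Qed.

Lemma mingen_mdeg_le_maxvar N M : mingen I N -> mingen I M ->
  (maxvar N < maxvar M)%N -> (mdeg N <= mdeg M)%N.
Proof.
move=> gN gM lt_NM; rewrite leqNgt; apply/negP=> lt_MN.
have [q Eq Mq] := maxvar_last (leq_ltn_trans (leq0n _) lt_NM).
have vN : vanishes_from q N by apply: vanishes_from_leq (maxvar_vanishes (m := N)) _; lia.
have vM : vanishes_from q.+1 M by rewrite Eq; apply: maxvar_vanishes.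
have lt_NMq : (N q < M q)%N by rewrite vN.
have [c cN [dc Ic]] :=
  almost_revlex_mdiv gM (ltnW lt_MN) lt_NMq (vanishes_from_leq vN (leqnSn q)) vM.
by move: dc; rewrite (gN.2 c Ic cN); lia.
Qed.

Lemma almost_revlex_mem N m (p : 'I_n) : mingen I N -> (mdeg N <= mdeg m)%N ->
  (m p < N p)%N -> vanishes_from p.+1 m -> vanishes_from p.+1 N -> 'X_[m] \in I.
Proof.
move=> gN le_Nm lt_mN vm vN.
by have [c cm [_ Ic]] := almost_revlex_mdiv gN le_Nm lt_mN vm vN; apply: mem_mdiv cm.
Qed.

Lemma mem_pure_power_lt_maxvar w (p q : 'I_n) : mingen I w -> vanishes_from p.+1 w ->
  (0 < w p)%N -> (q < p)%N -> 'X_[mulxi 0 q.+1 (mdeg w)] \in I.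
Proof.
move=> gw vw wp lt_qp; have ne_pq : p != q by rewrite neq_ltn lt_qp orbT.
apply: (almost_revlex_mem (p := p) gw _ _ _ vw); rewrite ?mdeg_mulxi ?mdeg0 //.
  by rewrite mulxi_off // mnm0E.
apply: (vanishes_from_leq _ (leqW lt_qp)).
exact/vanishes_mulxi/vanishes_from0.
Qed.

Lemma exists_mulxi_mem_last w (p : 'I_n) b : mingen I w -> vanishes_from p.+1 w ->
  (0 < w p)%N -> vanishes_from p b -> revlex_ge b (trunc p w) ->
  exists t, 'X_[mulxi b p.+1 t] \in I.
Proof.
move=> gw vw wp vb ge_bw; have Ew := trunc_mulxi vw.
have dw : mdeg w = (mdeg (trunc p w) + w p)%N by rewrite -{1}Ew mdeg_mulxi.
case: (ltnP (mdeg (trunc p w)) (mdeg b)) => [lt_wb|le_bw].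
  exists (w p).-1; apply: (almost_revlex_mem (p := p) gw _ _ _ vw).
  - by rewrite mdeg_mulxi; lia.
  - by rewrite mulxi_at vb //; lia.
  - exact: vanishes_mulxi (vanishes_from_leq vb _).
exists (w p); case/orP: ge_bw => [/eqP ->|]; first by rewrite Ew; case: gw.
case/orP=> [|/andP[/eqP dbw /existsP[s /andP[lt_s eq_s]]]]; first lia.
apply: (arI gw); first by rewrite mdeg_mulxi dbw.
rewrite -{2}Ew; apply: (revlex_gt_at (p := s)); first by rewrite !mdeg_mulxi dbw.
  by rewrite !mulxiE ltn_add2r.
by move=> t lt_st; rewrite !mulxiE; have := forallP eq_s t; rewrite lt_st => /eqP ->.
Qed.

Lemma exists_mulxi_mem w (p r : 'I_n) b : mingen I w -> vanishes_from p.+1 w ->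
  (0 < w p)%N -> (r <= p)%N -> vanishes_from r b ->
  (r = p :> nat -> revlex_ge b (trunc p w)) -> exists t, 'X_[mulxi b r.+1 t] \in I.
Proof.
move=> gw vw wp; case: ltngtP => // [lt_rp _ _ _ | /val_inj -> _ vb /(_ erefl)].
  exists (mdeg w); apply: (mem_mdiv (mem_pure_power_lt_maxvar gw vw wp lt_rp)).
  by apply/mdivP=> j; rewrite !mulxiE mnm0E leq_add2r.
exact: exists_mulxi_mem_last.
Qed.

Lemma mdeg_add_fI_le (q : 'I_n) a : (exists t, 'X_[mulxi 0 q.+1 t] \in I) ->
  'X_[0%MM] \notin I -> vanishes_from q a -> 'X_[a] \notin I ->
  (mdeg a + fI I q.+1 a <= fI I q.+1 0)%N.
Proof.
move=> ex I0 va Ia; set t0 := fI I q.+1 0.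
have g0 : mingen I (mulxi 0 q.+1 t0) := mingen_pure_power ex.
have t0_gt0 : (0 < t0)%N.
  by rewrite lt0n; apply: contraNneq I0 => t00; move: g0 => [+ _]; rewrite t00 mulxi0.
have mem s : (t0 <= mdeg a + s)%N -> (s < t0)%N -> 'X_[mulxi a q.+1 s] \in I.
  move=> le_t0 lt_st0; apply: (almost_revlex_mem (p := q) g0).
  - by rewrite !mdeg_mulxi mdeg0.
  - by rewrite !mulxi_at va // mnm0E.
  - exact/vanishes_mulxi/(vanishes_from_leq va).
  - exact/vanishes_mulxi/vanishes_from0.
have lt_at0 : (mdeg a < t0)%N.
  by rewrite ltnNge; apply: contra Ia => le_t0a; rewrite -(mulxi0 a q.+1) mem ?addn0.
have [/eqP|da_gt0] := posnP (mdeg a); first by rewrite mdeg_eq0 => /eqP ->; rewrite mdeg0.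
by have := fI_min (mem (t0 - mdeg a)%N _ _); lia.
Qed.

Lemma fI_le_mdeg_add_fI (q r : 'I_n) b : r = q.+1 :> nat ->
  (exists t, 'X_[mulxi 0 q.+1 t] \in I) -> (exists t, 'X_[mulxi b r.+1 t] \in I) ->
  vanishes_from r b -> 'X_[b] \notin I -> (fI I q.+1 0 <= mdeg b + fI I r.+1 b)%N.
Proof.
move=> Er ex0 exb vb Ib; have [N gN Nb] := exists_mingen_mdiv (fI_mem exb).
have dN : (mdeg N <= mdeg b + fI I r.+1 b)%N by rewrite -(mdeg_mulxi b r) mdeg_mdiv.
have vN : vanishes_from r.+1 N.
  move=> l le_rl; have := mdivP _ _ Nb l.
  by rewrite (vanishes_mulxi _ (vanishes_from_leq vb (leqnSn r))) // leqn0 => /eqP.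
have Nr_gt0 : (0 < N r)%N.
  rewrite lt0n; apply: contraNneq Ib => Nr0; apply: (mem_mdiv gN.1).
  apply/mdivP=> j; have := mdivP _ _ Nb j.
  by case: (eqVneq j r) => [->|ne_jr]; [rewrite Nr0 | rewrite mulxi_off].
apply: leq_trans (fI_min (_ : 'X_[mulxi 0 q.+1 (mdeg N)] \in I)) dN.
have ne_rq : r != q by rewrite -(inj_eq val_inj) /= Er neq_ltn ltnSn orbT.
apply: (almost_revlex_mem (p := r) gN _ _ _ vN).
- by rewrite mdeg_mulxi mdeg0.
- by rewrite mulxi_off // mnm0E.
- by apply: (vanishes_from_leq _ (_ : q.+1 <= r.+1)%N); [apply/vanishes_mulxi/vanishes_from0 | lia].
Qed.

End MonomialIdeal.

Theorem corollary2p13 (k : fieldType) (n : nat) (I : {pred {mpoly k[n]}})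
  (w : 'X_{1..n}) :
  is_monomial_ideal I -> almost_revlex I -> last_generator I w ->
  (2 <= maxvar w)%N ->
  (forall i : nat, (1 <= i)%N -> (i <= (maxvar w).-1)%N ->
     forall a b : 'X_{1..n},
       calI I w (maxvar w) i.-1 a -> calI I w (maxvar w) i b ->
       (mdeg a + fI I i a <= fI I i 0%MM)%N /\
       (fI I i 0%MM <= mdeg b + fI I i.+1 b)%N) /\
  (forall N M : 'X_{1..n}, mingen I N -> mingen I M ->
     (maxvar N < maxvar M)%N -> (mdeg N <= mdeg M)%N).
Proof.
move=> monI arI [gw _ _] mu_ge2; split; last exact: mingen_mdeg_le_maxvar.
have [p Ep wp] := maxvar_last (ltnW mu_ge2).
have vw : vanishes_from p.+1 w by rewrite Ep; apply: maxvar_vanishes.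
have I0 := one_notin_mingen gw wp.
move=> i i_gt0 le_ip a b Ia Ib; rewrite -Ep /= in le_ip Ia Ib.
have lt_in : (i < n)%N := leq_ltn_trans le_ip (ltn_ord p).
pose r := Ordinal lt_in; pose q := Ordinal (leq_ltn_trans (leq_pred i) lt_in).
have Eq : i = q.+1 by rewrite /= prednK.
have lt_qp : (q < p)%N by rewrite /=; lia.
have ex0 : exists t, 'X_[mulxi 0 q.+1 t] \in I.
  by exists (mdeg w); apply: (mem_pure_power_lt_maxvar (q := q) monI arI gw vw wp lt_qp).
have Ia_notin : 'X_[a] \notin I by apply: (calI_notin _ I0 Ia); lia.
have Ib_notin : 'X_[b] \notin I by apply: (calI_notin _ I0 Ib); lia.
case: Ia Ib => [va _ _] [vb _ ge_bw]; rewrite Eq in va; rewrite {1 2 3}Eq; split.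
  exact: mdeg_add_fI_le ex0 I0 va Ia_notin.
apply: (fI_le_mdeg_add_fI monI arI (r := r)) => //.
exact: (exists_mulxi_mem (r := r) monI arI gw vw wp le_ip vb ge_bw).
Qed.
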